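(* Fix an odd integer $u>0$. If the family $\mathcal{K}_2$ (for this $u$) is finite, then the family $\mathcal{K}_3$ (for this $u$) is finite.
   Context: For an odd prime $p$ put $p^*=(-1)^{(p-1)/2}p$; let $P^*=\{8,-4,-8\}\cup\{p^*: p\text{ odd prime}\}$, $P^*_+$ its positive and $P^*_-$ its negative elements. $E(K)$ denotes the exponent of the class group of a number field $K$. $\mathcal{K}_1$ is the family of fields $\mathbb{Q}(\sqrt{p^*})$ with $p^*\in P^*_-$ and $E(\mathbb{Q}(\sqrt{p^*}))\mid u$. $\mathcal{K}_2$ is the family of fields $\mathbb{Q}(\sqrt{p_1^*},\sqrt{p_2^*})$ with $p_1^*\in P^*_-$, $p_2^*\in P^*$, $E(\mathbb{Q}(\sqrt{p_1^*}))\mid u$, and either ($p_2^*<0$ and $E(\mathbb{Q}(\sqrt{p_2^*}))\mid u$) or ($p_2^*>0$ and $E(\mathbb{Q}(\sqrt{p_1^*p_2^*}))\mid 2u$). $\mathcal{K}_3$ is the family of fields $\mathbb{Q}(\sqrt{p_1^*},\sqrt{p_2^*},\sqrt{p_3^*})$ with $p_1^*,p_2^*\in P^*_-$, $p_3^*\in P^*$, such that $\mathbb{Q}(\sqrt{p_1^*},\sqrt{p_2^*})$, $\mathbb{Q}(\sqrt{p_1^*},\sqrt{p_3^*})$ and $\mathbb{Q}(\sqrt{p_2^*},\sqrt{p_3^*})$ all belong to $\mathcal{K}_2$. *)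

(* number fields are realised as subsets of algC. *)
From HB Require Import structures.
From mathcomp Require Import all_boot all_order all_algebra all_field.
Set Implicit Arguments. Unset Strict Implicit. Unset Printing Implicit Defensive.
Import Order.TTheory GRing.Theory Num.Theory.
Local Open Scope ring_scope.

Definition pstar (p : nat) : int := (-1) ^+ ((p - 1) %/ 2)%N * (p%:Z).
Definition inPstar (d : int) : Prop :=
  d = 8 \/ d = -4 \/ d = -8 \/ exists p : nat, [/\ prime p, odd p & d = pstar p].
Definition inPstar_pos (d : int) : Prop := inPstar d /\ 0 < d.
Definition inPstar_neg (d : int) : Prop := inPstar d /\ d < 0.

(* The number field Q(sqrt d_1, ..., sqrt d_k) inside algC: the Q-span of the
   products of the chosen square roots sqrtC d_i. *)
Definition Kfield (ds : seq int) (z : algC) : Prop :=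
  exists f : {ffun {set 'I_(size ds)} -> rat},
    z = \sum_(S : {set 'I_(size ds)}) ratr (f S) * \prod_(i in S) sqrtC ((ds`_i)%:~R).

Definition alg_int (z : algC) : Prop :=
  exists p : {poly int}, p \is monic /\ root (map_poly intr p) z.

Definition OK (ds : seq int) (z : algC) : Prop := Kfield ds z /\ alg_int z.

Definition is_ideal (ds : seq int) (I : algC -> Prop) : Prop :=
  [/\ forall z, I z -> OK ds z,
      I 0,
      forall x y, I x -> I y -> I (x + y),
      forall r x, OK ds r -> I x -> I (r * x)
    & exists x, I x /\ x != 0].

(* n-th power of an ideal (for n >= 1): sums of products of n elements of I *)
Definition idealPow (I : algC -> Prop) (n : nat) (z : algC) : Prop :=
  exists s : seq (seq algC),
    [/\ forall t, t \in s -> size t = n,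
        forall t x, t \in s -> x \in t -> I x
      & z = \sum_(t <- s) \prod_(x <- t) x].

Definition principal (ds : seq int) (J : algC -> Prop) : Prop :=
  exists a, OK ds a /\ forall z, J z <-> exists b, OK ds b /\ z = a * b.

(* E(K) | n : the n-th power of every ideal class is trivial, i.e. the n-th
   power of every nonzero integral ideal of O_K is principal. *)
Definition exp_dvd (ds : seq int) (n : nat) : Prop :=
  forall I, is_ideal ds I -> principal ds (idealPow I n).

Definition same_field (ds es : seq int) : Prop :=
  forall z, Kfield ds z <-> Kfield es z.

Definition K2cond (u : nat) (p1 p2 : int) : Prop :=
  [/\ inPstar_neg p1, inPstar p2, exp_dvd [:: p1] u &
      (p2 < 0 /\ exp_dvd [:: p2] u) \/ (0 < p2 /\ exp_dvd [:: p1 * p2] (2 * u))].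

Definition inK2 (u : nat) (ds : seq int) : Prop :=
  exists q1 q2, K2cond u q1 q2 /\ same_field [:: q1; q2] ds.

Definition K3cond (u : nat) (p1 p2 p3 : int) : Prop :=
  [/\ inPstar_neg p1, inPstar_neg p2 & inPstar p3] /\
  [/\ inK2 u [:: p1; p2], inK2 u [:: p1; p3] & inK2 u [:: p2; p3]].

Definition K2_finite (u : nat) : Prop :=
  exists L : seq (seq int), forall p1 p2, K2cond u p1 p2 ->
    exists2 ds, ds \in L & same_field [:: p1; p2] ds.

Definition K3_finite (u : nat) : Prop :=
  exists L : seq (seq int), forall p1 p2 p3, K3cond u p1 p2 p3 ->
    exists2 ds, ds \in L & same_field [:: p1; p2; p3] ds.

From mathcomp Require Import all_boot all_order all_algebra all_field.
Set Implicit Arguments. Unset Strict Implicit. Unset Printing Implicit Defensive.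
Import Order.TTheory GRing.Theory Num.Theory.
Local Open Scope ring_scope.

(* Q(sqrt p1, sqrt p2, sqrt p3) is the compositum of Q(sqrt p1, sqrt p2) and
   Q(sqrt p1, sqrt p3), both of which lie in K_2.  So if the fields of K_2 are
   among Q(ds) for ds in a finite list L, the fields of K_3 are among the
   composita Q(ds ++ es) with ds, es in L; nothing about u is used. *)

Section KfieldAlgebra.
Variable ds : seq int.

Definition sqrt_monomial (S : {set 'I_(size ds)}) : algC :=
  \prod_(i in S) sqrtC ((ds`_i)%:~R).

Lemma Kfield_monomial r S : Kfield ds (ratr r * sqrt_monomial S).
Proof.
exists [ffun T => if T == S then r else 0].
rewrite (bigD1 S) //= ffunE eqxx [X in _ = _ + X]big1 ?addr0 // => T /negbTE TS.
by rewrite ffunE TS rmorph0 mul0r.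
Qed.

Lemma Kfield_rat r : Kfield ds (ratr r).
Proof. by have := Kfield_monomial r set0; rewrite /sqrt_monomial big_set0 mulr1. Qed.

Lemma Kfield0 : Kfield ds 0.
Proof. by rewrite -(rmorph0 ratr); apply: Kfield_rat. Qed.

Lemma KfieldD x y : Kfield ds x -> Kfield ds y -> Kfield ds (x + y).
Proof.
move=> [f ->] [g ->]; exists [ffun S => f S + g S].
by rewrite -big_split; apply: eq_bigr => S _; rewrite ffunE rmorphD mulrDl.
Qed.

Lemma Kfield_sum (I : finType) (F : I -> algC) :
  (forall i, Kfield ds (F i)) -> Kfield ds (\sum_i F i).
Proof. by move=> KF; apply: big_ind => //; [apply: Kfield0 | apply: KfieldD]. Qed.

Lemma KfieldZ r x : Kfield ds x -> Kfield ds (ratr r * x).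
Proof.
move=> [f ->]; exists [ffun S => r * f S].
by rewrite mulr_sumr; apply: eq_bigr => S _; rewrite ffunE rmorphM mulrA.
Qed.

(* Multiplying a monomial by one of its own square roots either squares it
   away into the rational ds`_i or adjoins i to the monomial. *)
Lemma Kfield_sqrtM_monomial (i : 'I_(size ds)) S :
  Kfield ds (sqrtC ((ds`_i)%:~R) * sqrt_monomial S).
Proof.
have [iS | iNS] := boolP (i \in S).
  rewrite /sqrt_monomial (big_setD1 _ iS) /= mulrA -expr2 sqrtCK -ratr_int.
  exact: Kfield_monomial.
have := Kfield_monomial 1 (i |: S).
by rewrite /sqrt_monomial (big_setU1 _ iNS) /= rmorph1 mul1r.
Qed.

Lemma Kfield_ind (P : algC -> Prop) :
  (forall x y, P x -> P y -> P (x + y)) ->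
  (forall x y, P x -> P y -> P (x * y)) ->
  (forall r, P (ratr r)) ->
  (forall i : 'I_(size ds), P (sqrtC ((ds`_i)%:~R))) ->
  forall z, Kfield ds z -> P z.
Proof.
move=> PD PM Prat Psqrt z [f ->].
have P0 : P 0 by have := Prat 0; rewrite rmorph0.
have P1 : P 1 by have := Prat 1; rewrite rmorph1.
apply: (big_ind P) => // S _; apply: (PM _ _ (Prat _)).
by apply: (big_ind P) => // i _.
Qed.

Lemma KfieldM x y : Kfield ds x -> Kfield ds y -> Kfield ds (x * y).
Proof.
move=> Kx; elim/Kfield_ind: x / Kx y => [x x' Kx Kx' y Ky | x x' Kx Kx' y Ky |
                                        r y Ky | i y [f ->]].
- by rewrite mulrDl; apply: KfieldD; [apply: Kx | apply: Kx'].
- by rewrite -mulrA; apply: Kx; apply: Kx'.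
- exact: KfieldZ.
- rewrite mulr_sumr; apply: Kfield_sum => S.
  by rewrite mulrCA; apply/KfieldZ/Kfield_sqrtM_monomial.
Qed.

Lemma Kfield_sqrt x : x \in ds -> Kfield ds (sqrtC x%:~R).
Proof.
move=> x_in; have x_lt : (index x ds < size ds)%N by rewrite index_mem.
have := Kfield_monomial 1 [set Ordinal x_lt].
by rewrite /sqrt_monomial big_set1 /= nth_index // rmorph1 mul1r.
Qed.

End KfieldAlgebra.

Definition subfield (ds es : seq int) : Prop :=
  forall z, Kfield ds z -> Kfield es z.

Lemma subfield_gen ds es :
  (forall x, x \in ds -> Kfield es (sqrtC x%:~R)) -> subfield ds es.
Proof.
move=> gen_es; apply: Kfield_ind => [||| i]; [exact: KfieldD | exact: KfieldM |
  exact: Kfield_rat | exact/gen_es/mem_nth].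
Qed.

Lemma subfield_subset ds es : {subset ds <= es} -> subfield ds es.
Proof. by move=> sub_ds; apply: subfield_gen => x /sub_ds; apply: Kfield_sqrt. Qed.

Lemma subfield_cat ds es fs :
  subfield ds fs -> subfield es fs -> subfield (ds ++ es) fs.
Proof.
move=> ds_fs es_fs; apply: subfield_gen => x; rewrite mem_cat => /orP[] x_in.
- exact/ds_fs/Kfield_sqrt.
- exact/es_fs/Kfield_sqrt.
Qed.

Lemma same_field_compositum (a b c : int) ds es :
  same_field [:: a; b] ds -> same_field [:: a; c] es ->
  same_field [:: a; b; c] (ds ++ es).
Proof.
move=> ab_ds ac_es z; split; move: z.
- have ds_sub : {subset ds <= ds ++ es} by move=> x; rewrite mem_cat => ->.
  have es_sub : {subset es <= ds ++ es} by move=> x; rewrite mem_cat orbC => ->.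
  apply: subfield_gen => x; rewrite !inE => /or3P[] /eqP->.
  + by apply/(subfield_subset ds_sub)/ab_ds/Kfield_sqrt; rewrite !inE eqxx.
  + by apply/(subfield_subset ds_sub)/ab_ds/Kfield_sqrt; rewrite !inE eqxx orbT.
  + by apply/(subfield_subset es_sub)/ac_es/Kfield_sqrt; rewrite !inE eqxx orbT.
- apply: subfield_cat => z Kz.
  + apply: (@subfield_subset [:: a; b]); last exact/ab_ds.
    by move=> x; rewrite !inE => /orP[] ->; rewrite ?orbT.
  + apply: (@subfield_subset [:: a; c]); last exact/ac_es.
    by move=> x; rewrite !inE => /orP[] ->; rewrite ?orbT.
Qed.

Theorem mainTheorem5 (u : nat) (hu0 : (0 < u)%N) (hodd : odd u) :
  K2_finite u -> K3_finite u.
Proof.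
move=> [L cover_K2]; exists [seq ds ++ es | ds <- L, es <- L].
have K2_in_L x y : inK2 u [:: x; y] -> exists2 ds, ds \in L & same_field [:: x; y] ds.
  move=> [q1 [q2 [K2q same_q]]]; have [ds ds_in same_ds] := cover_K2 _ _ K2q.
  by exists ds => // z; apply: iff_trans (iff_sym (same_q z)) (same_ds z).
move=> p1 p2 p3 [_ [K2_12 K2_13 _]].
have [ds ds_in same_12] := K2_in_L _ _ K2_12.
have [es es_in same_13] := K2_in_L _ _ K2_13.
exists (ds ++ es); first exact: allpairs_f.
exact: same_field_compositum.
Qed.
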